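(* Let $(a_n)_{n\ge 0}$ be the sequence of real numbers defined by $a_0=a_1=0$, $a_2=1$ and, for $n\ge 3$, \[ a_n \;=\; \tfrac{19}{12}(n+1)-3 \;+\; \frac{6}{n^2(n-1)}\sum_{p=1}^{n}(p-1)(n-p)\,a_{p-1}. \] Then for all $n\ge 4$, \[ a_n \;=\; \tfrac{19}{6}n-\tfrac{37}{5}H_n+\tfrac{1183}{100}-\tfrac{37}{5}\,\frac{H_n}{n}-\tfrac{71}{300}\,\frac1n , \] and in particular $a_n\sim \tfrac{19}{6}n$ as $n\to\infty$.
   Context: $H_n=\sum_{k=1}^n 1/k$ denotes the $n$-th harmonic number. (In the paper, $a_n=\mathbb E[C_n]$ is the expected number of key comparisons made by Quickselect using Yaroslavskiy's dual-pivot partitioning when searching for a uniformly random rank in a uniformly random permutation of $n$ distinct keys; $\tfrac{19}{12}(n+1)-3$ is the expected number of comparisons of one partitioning step.) *)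

From Stdlib Require Import Reals.
Open Scope R_scope.

Fixpoint harm (n : nat) : R :=
  match n with
  | O => 0
  | S m => harm m + / INR (S m)
  end.

Definition quickselect_rec (a : nat -> R) : Prop :=
  a 0%nat = 0 /\ a 1%nat = 0 /\ a 2%nat = 1 /\
  forall n : nat, (3 <= n)%nat ->
    a n = 19 / 12 * (INR n + 1) - 3
          + 6 / (INR n ^ 2 * (INR n - 1))
            * sum_f 1 n (fun p => (INR p - 1) * (INR n - INR p) * a (p - 1)%nat).

From Stdlib Require Import Reals Lra Lia.
From Coquelicot Require Import Coquelicot.
Open Scope R_scope.

(* The full-history recurrence is turned into a local one.  Writing
   U(m) = sum_{x=0}^{m} x (m - x) a_x, the recurrence says that the
   "scaled excess" T(n) = (a_n - t_n) n^2 (n-1) / 6, with t_n the toll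
   19/12 (n+1) - 3, equals U(n-1) for n >= 3.  Taking second differences
   of U removes the history: U(m+1) - 2 U(m) + U(m-1) = m a_m, so
   T(m+2) - 2 T(m+1) + T(m) = m a_m for m >= 3.  The claimed closed form
   satisfies the same second-order relation (a rational identity in n and
   H_n), it agrees with a at n = 4, 5, and T determines a_n; a two-step
   induction gives the closed form for all n >= 4.  The asymptotics follow
   since H_n / n -> 0 (Cesaro) and 1 / n -> 0. *)

(* The toll of one partitioning step on n keys. *)
Definition toll (n : nat) : R := 19 / 12 * (INR n + 1) - 3.

Definition closed_form (n : nat) : R :=
  19 / 6 * INR n - 37 / 5 * harm n + 1183 / 100
  - 37 / 5 * (harm n / INR n) - 71 / 300 * (1 / INR n).

Definition weighted_sum (a : nat -> R) (m : nat) : R :=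
  sum_f_R0 (fun x => INR x * (INR m - INR x) * a x) m.

Definition scaled_excess (f : nat -> R) (n : nat) : R :=
  (f n - toll n) * (INR n ^ 2 * (INR n - 1)) / 6.

(* First difference of U: the weights grow by x when m grows by one. *)
Lemma weighted_sum_succ (a : nat -> R) (m : nat) :
  weighted_sum a (S m) = weighted_sum a m + sum_f_R0 (fun x => INR x * a x) m.
Proof.
  unfold weighted_sum. rewrite tech5, Rminus_diag, Rmult_0_r, Rmult_0_l, Rplus_0_r.
  rewrite <- plus_sum. apply sum_eq. intros i _. rewrite S_INR. ring.
Qed.

Lemma weighted_sum_second_difference (a : nat -> R) (m : nat) :
  weighted_sum a (S (S m)) - 2 * weighted_sum a (S m) + weighted_sum a m
  = INR (S m) * a (S m).
Proof. rewrite !weighted_sum_succ, tech5. ring. Qed.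

Lemma recurrence_sum_is_weighted_sum (a : nat -> R) (m : nat) :
  sum_f 1 (S m) (fun p => (INR p - 1) * (INR (S m) - INR p) * a (p - 1)%nat)
  = weighted_sum a m.
Proof.
  unfold sum_f, weighted_sum. replace (S m - 1)%nat with m by lia.
  apply sum_eq. intros i _. replace (i + 1 - 1)%nat with i by lia.
  rewrite plus_INR, !S_INR. simpl. ring.
Qed.

Lemma quickselect_scaled_excess (a : nat -> R) (m : nat) :
  quickselect_rec a -> (2 <= m)%nat -> scaled_excess a (S m) = weighted_sum a m.
Proof.
  intros (_ & _ & _ & rec) Hm.
  assert (Hx : INR m >= 2) by (apply Rle_ge, (le_INR 2); lia).
  unfold scaled_excess, toll.
  rewrite (rec (S m)) by lia. rewrite recurrence_sum_is_weighted_sum, S_INR.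
  field. lra.
Qed.

Lemma quickselect_second_difference (a : nat -> R) (m : nat) :
  quickselect_rec a -> (3 <= m)%nat ->
  scaled_excess a (S (S m)) - 2 * scaled_excess a (S m) + scaled_excess a m
  = INR m * a m.
Proof.
  intros ha Hm. destruct m as [|k]; [lia|].
  rewrite !(quickselect_scaled_excess a) by (assumption || lia).
  apply weighted_sum_second_difference.
Qed.

Lemma closed_form_second_difference (m : nat) : (1 <= m)%nat ->
  scaled_excess closed_form (S (S m)) - 2 * scaled_excess closed_form (S m)
  + scaled_excess closed_form m = INR m * closed_form m.
Proof.
  intros Hm. assert (Hx : INR m >= 1) by (apply Rle_ge, (le_INR 1); lia).
  unfold scaled_excess, closed_form, toll. cbn [harm]. rewrite !S_INR.
  field. lra.
Qed.

Lemma scaled_excess_inj (f h : nat -> R) (n : nat) : (2 <= n)%nat ->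
  scaled_excess f n = scaled_excess h n -> f n = h n.
Proof.
  intros Hn E. assert (Hx : INR n >= 2) by (apply Rle_ge, (le_INR 2); lia).
  unfold scaled_excess in E. set (w := INR n ^ 2 * (INR n - 1)) in E.
  assert (Hw : w / 6 <> 0)
    by (apply Rgt_not_eq; unfold w, Rdiv; apply Rmult_gt_0_compat; [nra | lra]).
  assert (f n - toll n = h n - toll n) as Hd.
  { apply (Rmult_eq_reg_r (w / 6)); [| exact Hw].
    unfold Rdiv in *. rewrite <- !Rmult_assoc. exact E. }
  lra.
Qed.

Lemma two_step_induction (P : nat -> Prop) (n0 : nat) :
  P n0 -> P (S n0) -> (forall m, (n0 <= m)%nat -> P m -> P (S m) -> P (S (S m))) ->
  forall n, (n0 <= n)%nat -> P n.
Proof.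
  intros H0 H1 Hstep.
  assert (pairs : forall k, P (n0 + k)%nat /\ P (S (n0 + k))).
  { induction k as [|k [IH IH']]; rewrite ?Nat.add_0_r; [easy|].
    rewrite Nat.add_succ_r. split; [easy|]. apply Hstep; [lia | easy | easy]. }
  intros n Hn. replace n with (n0 + (n - n0))%nat by lia. apply pairs.
Qed.

Lemma quickselect_initial (a : nat -> R) :
  quickselect_rec a -> a 4%nat = closed_form 4 /\ a 5%nat = closed_form 5.
Proof.
  intros (a0 & a1 & a2 & rec).
  assert (a3 : a 3%nat = 10 / 3) by (rewrite rec by lia; unfold sum_f; simpl;
                                    rewrite a0, a1; field).
  split; rewrite rec by lia; unfold sum_f, closed_form; simpl;
    rewrite ?a0, ?a1, ?a2, ?a3; field.
Qed.

Lemma quickselect_closed_form (a : nat -> R) :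
  quickselect_rec a -> forall n, (4 <= n)%nat -> a n = closed_form n.
Proof.
  intros ha. destruct (quickselect_initial a ha) as [a4 a5].
  apply two_step_induction; [exact a4 | exact a5 |].
  intros m Hm Em ESm. apply scaled_excess_inj; [lia|].
  (* Both sequences obey T(m+2) = 2 T(m+1) - T(m) + m f_m with equal data. *)
  assert (Tm : scaled_excess a m = scaled_excess closed_form m)
    by (unfold scaled_excess; now rewrite Em).
  assert (TSm : scaled_excess a (S m) = scaled_excess closed_form (S m))
    by (unfold scaled_excess; now rewrite ESm).
  pose proof (quickselect_second_difference a m ha ltac:(lia)) as Da.
  pose proof (closed_form_second_difference m ltac:(lia)) as Dg.
  rewrite Em in Da. lra.
Qed.

Lemma inv_n_cv : is_lim_seq (fun n => / INR n) 0.
Proof.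
  replace (Finite 0) with (Rbar_inv p_infty) by reflexivity.
  apply is_lim_seq_inv; [apply is_lim_seq_INR | discriminate].
Qed.

(* H_n / n -> 0, as the Cesaro mean of the null sequence 1/k. *)
Lemma harm_over_n_cv : is_lim_seq (fun n => harm n / INR n) 0.
Proof.
  assert (harm_sum : forall m, harm (S m) = sum_f_R0 (fun k => / INR (S k)) m).
  { induction m as [|m IH]; [simpl; field | rewrite tech5, <- IH; reflexivity]. }
  apply is_lim_seq_ext_loc
    with (fun n => sum_f_R0 (fun k => / INR (S k)) (pred n) / INR n).
  - exists 1%nat. intros [|n] Hn; [lia|]. simpl pred. now rewrite harm_sum.
  - apply is_lim_seq_Reals, Cesaro_1, is_lim_seq_Reals.
    exact (proj1 (is_lim_seq_incr_1 (fun n => / INR n) 0) inv_n_cv).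
Qed.

Lemma closed_form_ratio_cv :
  is_lim_seq (fun n => closed_form n / (19 / 6 * INR n)) 1.
Proof.
  apply is_lim_seq_ext_loc with (fun n => 1 + 6 / 19 *
    ((- 37 / 5) * (harm n / INR n) + 1183 / 100 * / INR n
     + (- 37 / 5) * ((harm n / INR n) * / INR n) + (- 71 / 300) * (/ INR n * / INR n))).
  - exists 1%nat. intros n Hn. assert (INR n > 0) by (apply lt_0_INR; lia).
    unfold closed_form. field. lra.
  - pose proof harm_over_n_cv as Hh. pose proof inv_n_cv as Hi.
    replace (Finite 1) with (Finite (1 + 6 / 19 * ((- 37 / 5) * 0 + 1183 / 100 * 0
      + (- 37 / 5) * (0 * 0) + (- 71 / 300) * (0 * 0)))) by (f_equal; ring).
    repeat first [ assumption | apply is_lim_seq_plus'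
                 | apply is_lim_seq_mult' | apply is_lim_seq_const ].
Qed.

Theorem proposition5p1 (a : nat -> R) (ha : quickselect_rec a) :
  (forall n : nat, (4 <= n)%nat ->
     a n = 19 / 6 * INR n - 37 / 5 * harm n + 1183 / 100
           - 37 / 5 * (harm n / INR n) - 71 / 300 * (1 / INR n))
  /\ Un_cv (fun n => a n / (19 / 6 * INR n)) 1.
Proof.
  pose proof (quickselect_closed_form a ha) as exact_formula.
  split; [exact exact_formula |].
  apply is_lim_seq_Reals, is_lim_seq_ext_loc
    with (fun n => closed_form n / (19 / 6 * INR n)); [| exact closed_form_ratio_cv].
  exists 4%nat. intros n Hn. now rewrite exact_formula.
Qed.
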